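(* Let $\rho=(a^b)$ be a partition of $n=ab$ with $a,b\ge 3$, and let $\alpha(\rho)=(a+1,a^{\,b-2},a-1)$ and $\beta(\rho)=(a^{\,b-1},a-1,1)$. Then each of $\alpha(\rho)$ and $\beta(\rho)$ belongs to a clique of size $4$ in $G_n$. In particular, $\alpha(\rho),\beta(\rho)\in\bigcup_{r\ge 3}L_r(n)$, i.e. both have local simplex dimension at least $3$.
   Context: The partition graph $G_n$ has as vertices the integer partitions of $n$; two partitions are adjacent if one is obtained from the other by a single elementary unit transfer followed by reordering: decrease one part by $1$ and either increase a different part by $1$ or create a new part equal to $1$, then delete a part that became $0$ and sort in nonincreasing order (the result being different from the original). Exponent notation $a^k$ denotes $k$ parts equal to $a$. The local simplex dimension of a vertex $v$ is $m-1$ where $m$ is the largest size of a clique of $G_n$ containing $v$; $L_r(n)$ is the set of vertices of local simplex dimension $r$. *)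

From mathcomp Require Import all_boot.
Set Implicit Arguments. Unset Strict Implicit. Unset Printing Implicit Defensive.

Definition is_partition (n : nat) (p : seq nat) : Prop :=
  [/\ sorted geq p, all (fun x => 0 < x) p & sumn p = n].

(* Elementary unit transfer: decrease part i by 1, then increase part j by 1
   (j = size p means "create a new part equal to 1"), delete zero parts, and
   sort in nonincreasing order. *)
Definition transfer (p : seq nat) (i j : nat) : seq nat :=
  sort geq (filter (fun x => x != 0)
    (incr_nth (set_nth 0 p i (nth 0 p i).-1) j)).

Definition move (p q : seq nat) : Prop :=
  exists i j, [/\ i < size p, j <= size p, i <> j, transfer p i j = q & q <> p].

Definition adj (p q : seq nat) : Prop := move p q \/ move q p.

Definition is_clique (n : nat) (s : seq (seq nat)) : Prop :=
  [/\ uniq s, (forall p, p \in s -> is_partition n p)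
    & (forall p q, p \in s -> q \in s -> p <> q -> adj p q)].

Definition in_clique_of_size (n : nat) (v : seq nat) (m : nat) : Prop :=
  exists s, [/\ is_clique n s, size s = m & v \in s].

Definition local_simplex_dim (n : nat) (v : seq nat) (r : nat) : Prop :=
  in_clique_of_size n v r.+1 /\ (forall m, in_clique_of_size n v m -> m <= r.+1).

Definition L (r n : nat) (v : seq nat) : Prop :=
  is_partition n v /\ local_simplex_dim n v r.

Definition alpha (a b : nat) : seq nat := (a.+1 :: nseq (b - 2) a) ++ [:: a.-1].
Definition beta (a b : nat) : seq nat := nseq (b - 1) a ++ [:: a.-1; 1].

From mathcomp Require Import all_boot zify.
From Stdlib Require Import Classical.
Set Implicit Arguments. Unset Strict Implicit. Unset Printing Implicit Defensive.

(* Both alpha(a^b) and beta(a^b) arise from a partition q of n - 1 by adding one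
   unit to a part: q = (a+1, a^(b-2), a-2) for alpha and q = (a^(b-2), (a-1)^2, 1)
   for beta.  Adding a unit to parts of q of two different sizes x <> y gives
   partitions that differ by one unit transfer (move the unit from a part x+1
   to a part y), so adding a unit to parts of pairwise distinct sizes gives a
   clique.  Here the sizes a+1, a, a-2, 0 (resp. a, a-1, 1, 0), where 0 stands
   for a new part, are distinct, so the clique has size 4.  Since G_n is finite,
   a largest clique through the vertex exists and has size at least 4. *)

Local Notation nonzero := (filter (fun x : nat => x != 0)).

Lemma geq_total : total geq.
Proof. by move=> m n; rewrite /= orbC leq_total. Qed.

Lemma geq_trans : transitive geq.
Proof. by move=> m n p /= le_mn le_pm; apply: leq_trans le_pm le_mn. Qed.

Lemma geq_anti : antisymmetric geq.
Proof. by move=> m n; rewrite andbC; apply: anti_leq. Qed.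

Lemma sort_geq_nonzero_id s : sorted geq s -> all (fun x => 0 < x) s ->
  sort geq (nonzero s) = s.
Proof.
move=> s_sorted s_pos; rewrite (all_filterP _) ?(sorted_sort geq_trans) //.
by apply: sub_all s_pos => x; rewrite lt0n.
Qed.

Lemma perm_cons2C (T : eqType) (a b : T) s : perm_eq [:: a, b & s] [:: b, a & s].
Proof. exact/permPl/(perm_catCA [:: a] [:: b]). Qed.

Lemma perm_set_nth (T : eqType) (x0 : T) s i y : i < size s ->
  perm_eq (nth x0 s i :: set_nth x0 s i y) (y :: s).
Proof.
elim: s i => // x s IH [|i] /= lt_i_s; first exact: perm_cons2C.
apply: perm_trans (perm_cons2C _ _ _) (perm_trans _ (perm_cons2C x y s)).
by rewrite perm_cons IH.
Qed.

Lemma incr_nth_set_nth s i : i < size s -> incr_nth s i = set_nth 0 s i (nth 0 s i).+1.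
Proof. by elim: s i => // x s IH [|i] //= /IH ->. Qed.

Lemma incr_nth_size s : incr_nth s (size s) = rcons s 1.
Proof. by elim: s => //= x s ->. Qed.

Lemma sumn_incr_nth s i : sumn (incr_nth s i) = (sumn s).+1.
Proof. by elim: s i => [|x s IH] [|i] //=; rewrite ?IH ?addnS //; elim: i. Qed.

Lemma sumn_nonzero s : sumn (nonzero s) = sumn s.
Proof. by elim: s => //= x s IH; case: eqP => [->|] /=; rewrite IH. Qed.

Lemma perm_nonzero_consK y s t :
  perm_eq (nonzero (y :: s)) (nonzero (y :: t)) = perm_eq (nonzero s) (nonzero t).
Proof. by rewrite /=; case: (y != 0); rewrite ?perm_cons. Qed.

Lemma perm_nonzero_cons_incr_nth s i : i <= size s ->
  perm_eq (nonzero (nth 0 s i :: incr_nth s i)) (nonzero ((nth 0 s i).+1 :: s)).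
Proof.
rewrite leq_eqVlt => /orP[/eqP ->|lt_i_s].
  by rewrite nth_default // incr_nth_size /= filter_rcons /= perm_rcons.
by rewrite incr_nth_set_nth //; apply/perm_filter/perm_set_nth.
Qed.

Lemma perm_nonzero_incr_nth s t i j :
  perm_eq (nonzero s) (nonzero t) -> i <= size s -> j <= size t ->
  nth 0 s i = nth 0 t j ->
  perm_eq (nonzero (incr_nth s i)) (nonzero (incr_nth t j)).
Proof.
move=> st le_i_s le_j_t eq_ij; rewrite -(perm_nonzero_consK (nth 0 s i)).
apply: perm_trans (perm_nonzero_cons_incr_nth le_i_s) _.
rewrite perm_sym eq_ij; apply: perm_trans (perm_nonzero_cons_incr_nth le_j_t) _.
by rewrite perm_nonzero_consK perm_sym.
Qed.

(* [j = size s] creates a new part equal to 1. *)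
Definition add_unit (s : seq nat) (j : nat) : seq nat :=
  sort geq (nonzero (incr_nth s j)).

Lemma transferE p i j : transfer p i j = add_unit (set_nth 0 p i (nth 0 p i).-1) j.
Proof. by []. Qed.

Lemma perm_add_unit s j : perm_eq (add_unit s j) (nonzero (incr_nth s j)).
Proof. by rewrite perm_sort. Qed.

Lemma add_unit_partition s j : is_partition (sumn s).+1 (add_unit s j).
Proof.
split; first exact: sort_sorted geq_total _.
  rewrite (perm_all _ (perm_add_unit s j)).
  by apply/allP => x; rewrite mem_filter lt0n => /andP[].
by rewrite (perm_sumn (perm_add_unit s j)) sumn_nonzero sumn_incr_nth.
Qed.

Lemma add_unit_perm s t i j :
  perm_eq (nonzero (incr_nth s i)) (nonzero (incr_nth t j)) -> add_unit s i = add_unit t j.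
Proof. exact/(perm_sortP geq_total geq_trans geq_anti). Qed.

Lemma add_unit_eq q u v : u <= size q -> v <= size q ->
  (add_unit q u = add_unit q v) <-> (nth 0 q u = nth 0 q v).
Proof.
move=> le_u_q le_v_q; split=> [|eq_uv]; last exact/add_unit_perm/perm_nonzero_incr_nth.
move/(perm_sortP geq_total geq_trans geq_anti) => eq_incr.
set x := nth 0 q u; set y := nth 0 q v.
have: perm_eq (nonzero [:: y; x.+1] ++ nonzero q) (nonzero [:: x; y.+1] ++ nonzero q).
  rewrite -!filter_cat !cat_cons !cat0s.
  apply: perm_trans (_ : perm_eq _ (nonzero [:: y, x & incr_nth q u])) _.
    by rewrite perm_nonzero_consK perm_sym perm_nonzero_cons_incr_nth.
  apply: perm_trans (_ : perm_eq _ (nonzero [:: x, y & incr_nth q v])) _.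
    apply: perm_trans (perm_filter _ (perm_cons2C y x _)) _.
    by rewrite !perm_nonzero_consK.
  by rewrite perm_nonzero_consK perm_nonzero_cons_incr_nth.
rewrite perm_cat2r => /perm_mem/(_ x.+1); rewrite !mem_filter !inE eqxx orbT /=.
by case/esym/orP => /eqP; lia.
Qed.

Lemma move_add_unit q u v : u <= size q -> v <= size q ->
  nth 0 q u != nth 0 q v -> move (add_unit q u) (add_unit q v).
Proof.
move=> le_u_q le_v_q neq_uv.
set p := add_unit q u; set x := nth 0 q u; set y := nth 0 q v.
have x_ne_y : x != y := neq_uv.
have x1p : x.+1 \in p.
  have <- : nth 0 (incr_nth q u) u = x.+1 by rewrite nth_incr_nth eqxx.
  rewrite (perm_mem (perm_add_unit q u)) mem_filter mem_nth.
    by rewrite nth_incr_nth eqxx.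
  by rewrite size_incr_nth; case: ifP.
pose i := index x.+1 p; pose r := set_nth 0 p i x.
have lt_i_p : i < size p by rewrite index_mem.
have p_i : nth 0 p i = x.+1 by rewrite nth_index.
have r_q : perm_eq (nonzero r) (nonzero q).
  rewrite -(perm_nonzero_consK x.+1) -p_i.
  apply: perm_trans (perm_filter _ (perm_set_nth 0 x lt_i_p)) _.
  rewrite p_i; apply: perm_trans _ (perm_nonzero_cons_incr_nth le_u_q).
  rewrite perm_nonzero_consK -(filter_id _ (incr_nth q u)).
  exact/perm_filter/perm_add_unit.
have size_r : size r = size p by rewrite size_set_nth; apply/maxn_idPr.
pose j := index y r.
have r_j : nth 0 r j = y.
  have [/nth_index //|y_notin_r] := boolP (y \in r).
  rewrite nth_default; last by rewrite leqNgt index_mem.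
  apply/esym/eqP; apply: contraNT y_notin_r => y_nz.
  have lt_v_q : v < size q.
    by rewrite ltnNge; apply: contra y_nz => /(nth_default 0) y0; apply/eqP.
  have : y \in nonzero q by rewrite mem_filter y_nz mem_nth.
  by rewrite -(perm_mem r_q) mem_filter => /andP[].
exists i, j; split=> //.
- by rewrite -size_r index_size.
- by move=> eq_ij; move: x_ne_y; rewrite -r_j -eq_ij /r nth_set_nth /= !eqxx.
- by rewrite transferE p_i; apply/add_unit_perm/(perm_nonzero_incr_nth r_q (index_size y r)).
- by move/(add_unit_eq le_v_q le_u_q) => eq_vu; rewrite eq_vu eqxx in neq_uv.
Qed.

Lemma add_unit_clique q us : all (fun u => u <= size q) us ->
  uniq [seq nth 0 q u | u <- us] -> is_clique (sumn q).+1 [seq add_unit q u | u <- us].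
Proof.
move=> /allP us_q uniq_nth; split.
- elim: us us_q uniq_nth => //= u us IH us_q /andP[u_notin uniq_us].
  have us_q' : {in us, forall w, w <= size q}.
    by move=> w w_us; apply: us_q; rewrite inE w_us orbT.
  rewrite IH // andbT; apply: contra u_notin => /mapP[w w_us eq_uw].
  apply/mapP; exists w => //.
  by apply/(add_unit_eq (us_q u (mem_head u us)) (us_q' w w_us)).
- by move=> p /mapP[u _ ->]; apply: add_unit_partition.
- move=> _ _ /mapP[u u_us ->] /mapP[v v_us ->] neq_uv; left.
  have [le_u_q le_v_q] := (us_q u u_us, us_q v v_us).
  apply: move_add_unit => //; apply/eqP => eq_nth; apply: neq_uv.
  exact/(add_unit_eq le_u_q le_v_q).
Qed.

Lemma add_unit_in_clique q us u : all (fun w => w <= size q) us ->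
  uniq [seq nth 0 q w | w <- us] -> u \in us ->
  in_clique_of_size (sumn q).+1 (add_unit q u) (size us).
Proof.
move=> us_q uniq_nth u_us; exists [seq add_unit q w | w <- us].
by split; [exact: add_unit_clique | exact: size_map | exact: map_f].
Qed.

Fixpoint bounded_seqs (m k : nat) : seq (seq nat) :=
  if k is k'.+1 then [::] :: [seq x :: s | x <- iota 0 m.+1, s <- bounded_seqs m k']
  else [:: [::]].

Lemma mem_bounded_seqs m k s : size s <= k -> all (fun x => x <= m) s ->
  s \in bounded_seqs m k.
Proof.
elim: k s => [|k IH] [|x s] //.
move=> le_s_k /andP[le_x_m s_m]; rewrite in_cons; apply/orP; right.
by apply: (allpairs_f (fun x s => x :: s)); [rewrite mem_iota | exact: IH].
Qed.

Lemma partition_bounded n p : is_partition n p -> p \in bounded_seqs n n.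
Proof.
case=> _ p_pos <-; apply: mem_bounded_seqs.
  by elim: p p_pos => //= x p IH /andP[x_pos /IH]; rewrite -add1n; apply: leq_add.
apply/allP => x; elim: p p_pos => //= y p IH /andP[_ p_pos].
rewrite inE => /orP[/eqP ->|/(IH p_pos) le_x_p]; first exact: leq_addr.
exact: leq_trans le_x_p (leq_addl _ _).
Qed.

Lemma clique_size_bounded n v m : in_clique_of_size n v m -> m <= size (bounded_seqs n n).
Proof.
case=> s [[uniq_s s_part _] <- _]; apply: uniq_leq_size => // p /s_part.
exact: partition_bounded.
Qed.

Lemma ex_maxn_bounded (P : nat -> Prop) m B : P m -> (forall k, P k -> k <= B) ->
  exists2 k, P k & forall l, P l -> l <= k.
Proof.
elim: B m => [|B IH] m Pm le_B; first by exists m => // l /le_B; rewrite leqn0 => /eqP ->.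
have [PB|not_PB] := classic (P B.+1); first by exists B.+1.
apply: (IH m) => // k Pk; have := le_B k Pk; rewrite leq_eqVlt => /orP[/eqP eq_k|//].
by rewrite eq_k in Pk.
Qed.

Lemma L_of_in_clique n v m : in_clique_of_size n v m -> exists2 r, m <= r.+1 & L r n v.
Proof.
move=> v_m; have [k v_k k_max] := ex_maxn_bounded v_m (@clique_size_bounded n v).
have [s [[_ s_part _] size_s v_s]] := v_k.
have k_gt0 : 0 < k by rewrite -size_s; case: s v_s {size_s s_part}.
exists k.-1; first by rewrite prednK // k_max.
by split; [exact: s_part | rewrite /local_simplex_dim prednK].
Qed.

Lemma incr_nth_cat s t i : incr_nth (s ++ t) (size s + i) = s ++ incr_nth t i.
Proof. by elim: s => //= x s ->. Qed.

Lemma path_geq_nseq x y m s : y <= x -> path geq y s -> path geq x (nseq m y ++ s).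
Proof.
elim: m x => [|m IH] x le_yx /=; last by move=> /(IH y (leqnn y)) ->; rewrite le_yx.
by case: s => //= z s /andP[le_zy ->]; rewrite (leq_trans le_zy le_yx).
Qed.

Lemma alpha_in_clique a b : 3 <= a -> 3 <= b -> in_clique_of_size (a * b) (alpha a b) 4.
Proof.
move=> ha hb; set pre := a.+1 :: nseq (b - 2) a; pose q := pre ++ [:: a.-2].
have size_pre : size pre = b - 1 by rewrite /= size_nseq; lia.
have size_q : size q = b by rewrite size_cat size_pre addn1; lia.
have -> : a * b = (sumn q).+1 by rewrite sumn_cat /= sumn_nseq; nia.
have -> : alpha a b = add_unit q (b - 1).
  rewrite /add_unit -[b - 1]addn0 -size_pre incr_nth_cat.
  rewrite (_ : incr_nth [:: a.-2] 0 = [:: a.-1]); last by congr [:: _]; lia.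
  rewrite sort_geq_nonzero_id //= ?path_geq_nseq //= ?all_cat ?all_nseq /=; lia.
apply: (@add_unit_in_clique _ [:: b - 1; 0; 1; b]); last exact: mem_head.
  by rewrite size_q /=; lia.
have q_last : nth 0 q (b - 1) = a.-2 by rewrite nth_cat size_pre ltnn subnn.
have b2_gt0 : 0 < b - 2 by lia.
have q_1 : nth 0 q 1 = a by rewrite /q /pre /= nth_cat size_nseq b2_gt0 nth_nseq b2_gt0.
have q_b : nth 0 q b = 0 by rewrite nth_default // size_q.
rewrite !map_cons q_last q_1 q_b /= !inE; lia.
Qed.

Lemma beta_in_clique a b : 3 <= a -> 3 <= b -> in_clique_of_size (a * b) (beta a b) 4.
Proof.
move=> ha hb; pose q := nseq (b - 2) a ++ [:: a.-1; a.-1; 1].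
have size_q : size q = b.+1 by rewrite size_cat size_nseq /=; lia.
have -> : a * b = (sumn q).+1 by rewrite sumn_cat /= sumn_nseq; nia.
have -> : beta a b = add_unit q (b - 2).
  have nseq_cons m t : nseq m a ++ a :: t = a :: nseq m a ++ t by elim: m => //= m ->.
  rewrite /add_unit -[b - 2]addn0 -(size_nseq (b - 2) a) incr_nth_cat.
  rewrite (_ : incr_nth [:: a.-1; a.-1; 1] 0 = [:: a; a.-1; 1]); last by congr (_ :: _); lia.
  rewrite nseq_cons sort_geq_nonzero_id /beta.
  - by rewrite (_ : b - 1 = (b - 2).+1) //; lia.
  - by rewrite /= path_geq_nseq //= ?andbT; lia.
  - by rewrite /= all_cat all_nseq /=; lia.
apply: (@add_unit_in_clique _ [:: b - 2; 0; b; b.+1]); last exact: mem_head.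
  by rewrite size_q /=; lia.
have q_mid : nth 0 q (b - 2) = a.-1 by rewrite nth_cat size_nseq ltnn subnn.
have b2_gt0 : 0 < b - 2 by lia.
have q_0 : nth 0 q 0 = a by rewrite nth_cat size_nseq b2_gt0 nth_nseq b2_gt0.
have q_b : nth 0 q b = 1.
  rewrite nth_cat size_nseq ltnNge leq_subr /=.
  by have -> : b - (b - 2) = 2 by lia.
have q_end : nth 0 q b.+1 = 0 by rewrite nth_default // size_q.
rewrite !map_cons q_mid q_0 q_b q_end /= !inE; lia.
Qed.

Theorem proposition4p7 (a b : nat) (ha : 3 <= a) (hb : 3 <= b) :
  [/\ in_clique_of_size (a * b) (alpha a b) 4,
      in_clique_of_size (a * b) (beta a b) 4,
      (exists2 r, 3 <= r & L r (a * b) (alpha a b))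
    & (exists2 r, 3 <= r & L r (a * b) (beta a b))].
Proof.
have alpha4 := alpha_in_clique ha hb; have beta4 := beta_in_clique ha hb.
have [r le_4r alphaL] := L_of_in_clique alpha4.
have [s le_4s betaL] := L_of_in_clique beta4.
by split=> //; [exists r | exists s].
Qed.
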